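(* Let $N = n+1 \geq 4$ be even and let $\boldsymbol{\lambda} = (\lambda_1,\dots,\lambda_N) \in \Lambda_N$. Let $V_N = \{\mathbf{v}_0,\dots,\mathbf{v}_N\} \subset \mathbb{R}^n$ with $\mathbf{v}_0 = \mathbf{0}$ and $\mathbf{v}_i = \lambda_i(\mathbf{e}_{i-1} - \mathbf{e}_i)$ for $1 \le i \le N$, and let $G^{\mathbf{0}}_{\boldsymbol{\lambda}} = \operatorname{conv} V_N$. Then $G^{\mathbf{0}}_{\boldsymbol{\lambda}}$ has exactly two triangulations (with vertices among $V_N$), namely \[ \Delta_+(G^{\mathbf{0}}_{\boldsymbol{\lambda}}) = \{\operatorname{conv}(V_N \setminus \{\mathbf{v}_i\}) \mid 1\le i\le N,\ \lambda_i = \lambda_1\} \] and \[ \Delta_-(G^{\mathbf{0}}_{\boldsymbol{\lambda}}) = \{\operatorname{conv}(V_N \setminus \{\mathbf{v}_i\}) \mid 1\le i\le N,\ \lambda_i = -\lambda_1\}. \] Moreover, both of these triangulations are regular.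
   Context: $\mathbf{e}_1,\dots,\mathbf{e}_n$ is the standard basis of $\mathbb{R}^n$, and by convention $\mathbf{e}_0 = \mathbf{e}_{n+1} = \mathbf{e}_N = \mathbf{0}$. For even $N$, $\Lambda_N = \{(\lambda_1,\dots,\lambda_N) \in \{-1,1\}^N \mid \sum_{i=1}^N \lambda_i = 0\}$. A triangulation of a polytope is a subdivision into simplices; it is regular if it is the projection to $\mathbb{R}^n$ of the lower facets (facets whose inner normal has positive last coordinate) of the lifted polytope $\operatorname{conv}\{(\mathbf{v}, h(\mathbf{v}))\}$ for some height function $h$ on the vertices. *)

From HB Require Import structures.
From mathcomp Require Import all_boot all_order all_algebra.
From mathcomp Require Import reals.
Set Implicit Arguments. Unset Strict Implicit. Unset Printing Implicit Defensive.
Import Order.TTheory GRing.Theory Num.Theory.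
Local Open Scope ring_scope.

Section Geometry.
Variable R : realType.

Definition dotv (k : nat) (a b : 'rV[R]_k) : R := \sum_(j < k) a 0 j * b 0 j.

Definition in_conv (m k : nat) (p : 'I_m -> 'rV[R]_k) (S : {set 'I_m}) (x : 'rV[R]_k) : Prop :=
  exists w : 'I_m -> R,
    [/\ forall i, 0 <= w i, forall i, i \notin S -> w i = 0,
        \sum_i w i = 1 & x = \sum_i w i *: p i].

Definition aff_indep (m k : nat) (p : 'I_m -> 'rV[R]_k) (S : {set 'I_m}) : Prop :=
  forall w : 'I_m -> R, (forall i, i \notin S -> w i = 0) ->
    \sum_i w i = 0 -> \sum_i w i *: p i = 0 -> forall i, w i = 0.

Definition same_hull (m k : nat) (p : 'I_m -> 'rV[R]_k) (S S' : {set 'I_m}) : Prop :=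
  forall x, in_conv p S x <-> in_conv p S' x.

(* A triangulation of conv(p) in R^n with vertices among the p i : a collection T of
   cells (index sets, standing for the simplices conv(p(S))) such that every cell is an
   n-simplex, the cells cover conv(p), and any two cells intersect in the common face
   spanned by their common vertices. *)
Definition is_triangulation (m n : nat) (p : 'I_m -> 'rV[R]_n) (T : {set {set 'I_m}}) : Prop :=
  [/\ forall S, S \in T -> #|S| = n.+1 /\ aff_indep p S,
      forall x, in_conv p setT x <-> exists2 S, S \in T & in_conv p S x &
      forall S S', S \in T -> S' \in T ->
        forall x, (in_conv p S x /\ in_conv p S' x) <-> in_conv p (S :&: S') x].

Definition lift (m n : nat) (p : 'I_m -> 'rV[R]_n) (h : 'I_m -> R) (i : 'I_m) : 'rV[R]_(n + 1) :=
  row_mx (p i) (\row_(j < 1) h i).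

(* L is the vertex-index set of a lower facet of the lifted polytope
   conv{(p i, h i)} : the face cut out by a supporting hyperplane whose inner normal
   (c, c0) has positive last coordinate c0, which is a proper face of dimension n
   (i.e. a facet of a polytope in R^(n+1)). *)
Definition lower_facet (m n : nat) (p : 'I_m -> 'rV[R]_n) (h : 'I_m -> R) (L : {set 'I_m}) : Prop :=
  exists (c : 'rV[R]_n) (c0 d : R),
    [/\ 0 < c0,
        forall i, d <= dotv c (p i) + c0 * h i,
        forall i, i \in L <-> dotv c (p i) + c0 * h i = d,
        exists i, i \notin L &
        exists2 S' : {set 'I_m}, (S' \subset L) && (#|S'| == n.+1) & aff_indep (lift p h) S'].

Definition regular_triangulation (m n : nat) (p : 'I_m -> 'rV[R]_n) (T : {set {set 'I_m}}) : Prop :=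
  is_triangulation p T /\
  exists h : 'I_m -> R,
    (forall S, S \in T -> exists L, lower_facet p h L /\ same_hull p S L) /\
    (forall L, lower_facet p h L -> exists2 S, S \in T & same_hull p S L).

(* e_k for k = 1..n is the k-th standard basis vector; e_0 = e_(n+1) = 0 *)
Definition e (n : nat) (k : nat) : 'rV[R]_n := \row_(j < n) (k == j.+1)%:R.

(* Lambda_N, with lam (j : 'I_N) standing for lambda_(j+1) *)
Definition in_Lambda (N : nat) (lam : 'I_N -> R) : Prop :=
  (forall i, lam i = 1 \/ lam i = -1) /\ \sum_i lam i = 0.

(* lambda_k for 1 <= k <= N = n+1 (index k : 'I_(n+2)) *)
Definition lamk (n : nat) (lam : 'I_n.+1 -> R) (k : 'I_n.+2) : R := lam (inord k.-1).

Definition VN (n : nat) (lam : 'I_n.+1 -> R) (k : 'I_n.+2) : 'rV[R]_n :=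
  if (k : nat) == 0%N then 0 else lamk lam k *: (e n k.-1 - e n k).

Definition Delta_plus (n : nat) (lam : 'I_n.+1 -> R) : {set {set 'I_n.+2}} :=
  [set ~: [set k] | k : 'I_n.+2 & ((0 < k)%N && (lamk lam k == lam ord0))].
Definition Delta_minus (n : nat) (lam : 'I_n.+1 -> R) : {set {set 'I_n.+2}} :=
  [set ~: [set k] | k : 'I_n.+2 & ((0 < k)%N && (lamk lam k == - lam ord0))].

End Geometry.

(* The points v_0, ..., v_N affinely span R^n and have, up to scaling, a single
   affine dependence nu: nu_0 = 0 and nu_k = lambda_1 lambda_k.  So two barycentric
   coordinate vectors of a point differ by a multiple of nu, and for nu_a <> 0 the
   point with coordinates u lies in conv(V_N \ {v_a}) iff u - (u_a / nu_a) nu >= 0.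
   Hence conv(V_N \ {v_a}) is an n-simplex iff nu_a <> 0, two such simplices meet
   in their common face iff nu_a and nu_b have the same sign, and the simplices
   with nu_a > 0 (resp. nu_a < 0) cover the polytope, taking a to minimize
   u_a / nu_a: the triangulations are exactly the two sign classes of nu.  For the
   heights nu, sum_i nu_i (<c, v_i> + c_0 nu_i - d) = c_0 sum_i nu_i^2 > 0 shows
   that a lower facet misses exactly one vertex, where nu is positive; this gives
   regularity of both (use -nu for the other). *)

From Pilot Require Import Defs.
From HB Require Import structures.
From mathcomp Require Import all_boot all_order all_algebra.
From mathcomp Require Import reals zify ring lra.
Set Implicit Arguments. Unset Strict Implicit. Unset Printing Implicit Defensive.
Import Order.TTheory GRing.Theory Num.Theory.
Local Open Scope ring_scope.

Section AffineGeometry.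
Variables (R : realType) (m k : nat).
Implicit Types (c : 'rV[R]_k) (p : 'I_m -> 'rV[R]_k) (w : 'I_m -> R).

Lemma dotv0 c : dotv c 0 = 0.
Proof. by rewrite /dotv big1 // => j _; rewrite mxE mulr0. Qed.

Lemma dotvZ c a v : dotv c (a *: v) = a * dotv c v.
Proof. by rewrite /dotv mulr_sumr; apply: eq_bigr => j _; rewrite mxE mulrCA. Qed.

Lemma dotvB c u v : dotv c (u - v) = dotv c u - dotv c v.
Proof. by rewrite /dotv -sumrB; apply: eq_bigr => j _; rewrite !mxE mulrBr. Qed.

Lemma dotv_sumZ c p w : dotv c (\sum_i w i *: p i) = \sum_i w i * dotv c (p i).
Proof.
rewrite /dotv; under [RHS]eq_bigr do rewrite mulr_sumr.
rewrite exchange_big; apply: eq_bigr => j _.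
by rewrite summxE mulr_sumr; apply: eq_bigr => i _; rewrite mxE mulrCA.
Qed.

Lemma dependence_orth_affine p w c d :
  \sum_i w i = 0 -> \sum_i w i *: p i = 0 ->
  \sum_i w i * (dotv c (p i) + d) = 0.
Proof.
move=> w_sum w_dep; under eq_bigr do rewrite mulrDr.
by rewrite big_split /= -dotv_sumZ w_dep dotv0 -mulr_suml w_sum mul0r addr0.
Qed.

Lemma sumr_gt0_term w a : (forall i, 0 <= w i) -> 0 < w a -> 0 < \sum_i w i.
Proof. by move=> w_ge0 wa; rewrite (bigD1 a) //= ltr_wpDr // sumr_ge0. Qed.

Definition barycenter p w : 'rV[R]_k := \sum_i (w i / \sum_j w j) *: p i.

Lemma barycenterE p w :
  barycenter p w = (\sum_j w j)^-1 *: \sum_i w i *: p i.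
Proof. by rewrite scaler_sumr; apply: eq_bigr => i _; rewrite scalerA mulrC. Qed.

Lemma barycenter1 p w : \sum_i w i = 1 -> barycenter p w = \sum_i w i *: p i.
Proof. by move=> w1; rewrite barycenterE w1 invr1 scale1r. Qed.

Lemma in_conv_barycenter p w (S : {set 'I_m}) :
  (forall i, 0 <= w i) -> 0 < \sum_i w i -> (forall i, i \notin S -> w i = 0) ->
  in_conv p S (barycenter p w).
Proof.
move=> w_ge0 w_gt0 wS; exists (fun i => w i / \sum_j w j); split => //.
- by move=> i; rewrite divr_ge0 // ltW.
- by move=> i /wS ->; rewrite mul0r.
- by rewrite -mulr_suml divff // gt_eqF.
Qed.

Lemma in_conv_subset p (S S' : {set 'I_m}) x :
  S \subset S' -> in_conv p S x -> in_conv p S' x.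
Proof.
move=> /subsetP sSS' [w [w_ge0 wS w1 ->]]; exists w; split => // i iS'.
by apply: wS; apply: contra iS'; apply: sSS'.
Qed.

Lemma aff_indep_lift p h (S : {set 'I_m}) :
  aff_indep p S -> aff_indep (Defs.lift p h) S.
Proof.
move=> indep w wS w_sum w_dep; apply: indep => //; apply/rowP => j.
have := congr1 (fun v : 'rV[R]_(k + 1) => v 0 (lshift 1 j)) w_dep.
rewrite !summxE !mxE => {2}<-; apply: eq_bigr => i _.
by rewrite [RHS]mxE row_mxEl mxE.
Qed.

Definition circuit_cells (nu : 'I_m -> R) : {set {set 'I_m}} :=
  [set ~: [set a] | a : 'I_m & 0 < nu a].

Lemma circuit_cellsP (nu : 'I_m -> R) S :
  reflect (exists2 a, 0 < nu a & S = ~: [set a]) (S \in circuit_cells nu).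
Proof. by apply: (iffP imsetP) => -[a]; [rewrite inE|]; exists a; rewrite ?inE. Qed.

Lemma setC1_circuit_cells (nu : 'I_m -> R) a :
  (~: [set a] \in circuit_cells nu) = (0 < nu a).
Proof.
apply/circuit_cellsP/idP => [[b nub /setC_inj/set1_inj ->] //|nua].
by exists a.
Qed.

(* Together with [circuit_dep], the last field says that [p] affinely spans R^k
   and its affine dependences are the multiples of [nu] ([circuit_dependenceP]);
   it is stated in this dual form because regularity needs the affine functions. *)
Record affine_circuit (p : 'I_m -> 'rV[R]_k) (nu : 'I_m -> R) : Prop := {
  circuit_sum : \sum_i nu i = 0;
  circuit_dep : \sum_i nu i *: p i = 0;
  circuit_neq0 : exists i, nu i != 0;
  circuit_affine : forall f, \sum_i f i * nu i = 0 ->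
    exists c d, forall i, f i = dotv c (p i) + d }.

End AffineGeometry.

Section Circuit.
Variables (R : realType) (n : nat) (p : 'I_n.+2 -> 'rV[R]_n) (nu : 'I_n.+2 -> R).
Hypothesis circ : affine_circuit p nu.

Lemma circuit_exists_pos : exists a, 0 < nu a.
Proof.
case: (pickP (fun a => 0 < nu a)) => [a /= nua|nu_le0]; first by exists a.
have [i /negP[]] := circuit_neq0 circ; rewrite -oppr_eq0; apply/eqP.
apply: (psumr_eq0P (P := predT) (F := fun j => - nu j)) => // [j _|].
  by rewrite oppr_ge0 leNgt nu_le0.
by rewrite sumrN (circuit_sum circ) oppr0.
Qed.

Lemma circuit_sqr_sum_gt0 : 0 < \sum_i nu i ^+ 2.
Proof.
have [i nui] := circuit_neq0 circ.
by apply: (sumr_gt0_term (a := i)) => [j|]; rewrite ?sqr_ge0 ?exprn_even_gt0.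
Qed.

Lemma circuit_dependenceP w :
  \sum_i w i = 0 -> \sum_i w i *: p i = 0 -> exists t, forall i, w i = t * nu i.
Proof.
move=> w_sum w_dep; have nu2_gt0 := circuit_sqr_sum_gt0.
pose t := (\sum_i w i * nu i) / \sum_i nu i ^+ 2.
pose f i := w i - t * nu i.
have f_orth : \sum_i f i * nu i = 0.
  under eq_bigr do rewrite mulrBl -mulrA -expr2.
  by rewrite sumrB -mulr_sumr divfK ?subrr ?gt_eqF.
have [c [d fE]] := circuit_affine circ f_orth.
have f_sqr : \sum_i f i ^+ 2 = 0.
  transitivity (\sum_i w i * f i - t * \sum_i f i * nu i).
    by rewrite mulr_sumr -sumrB; apply: eq_bigr => j _; rewrite /f; ring.
  rewrite f_orth mulr0 subr0.
  under eq_bigr do rewrite fE.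
  exact: dependence_orth_affine.
exists t => j; apply/eqP; rewrite -subr_eq0 -sqrf_eq0; apply/eqP.
by apply: (psumr_eq0P (P := predT)) f_sqr _ _ => // l _; rewrite sqr_ge0.
Qed.

Lemma circuit_sum_shift c t : \sum_i (c i + t * nu i) = \sum_i c i.
Proof. by rewrite big_split /= -mulr_sumr (circuit_sum circ) mulr0 addr0. Qed.

Lemma barycenter_shift c t :
  barycenter p (fun i => c i + t * nu i) = barycenter p c.
Proof.
rewrite !barycenterE circuit_sum_shift; congr (_ *: _).
under eq_bigr do rewrite scalerDl -scalerA.
by rewrite big_split /= -scaler_sumr (circuit_dep circ) scaler0 addr0.
Qed.

Lemma in_conv_circuitP c S : 0 < \sum_i c i ->
  in_conv p S (barycenter p c) <->
  exists t, (forall i, 0 <= c i + t * nu i) /\ (forall i, i \notin S -> c i + t * nu i = 0).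
Proof.
move=> c_gt0; split => [[w [w_ge0 wS w1 wE]]|[t [ge0 tS]]]; last first.
  rewrite -(barycenter_shift c t); apply: in_conv_barycenter => //.
  by rewrite circuit_sum_shift.
pose s := \sum_i c i.
have [t0 t0E] : exists t0, forall i, w i - c i / s = t0 * nu i.
  apply: circuit_dependenceP; first by rewrite sumrB w1 -mulr_suml divff ?subrr ?gt_eqF.
  under eq_bigr do rewrite scalerBl.
  by rewrite sumrB -wE; apply: subrr.
have shiftE i : c i + t0 * s * nu i = s * w i.
  by rewrite mulrAC -t0E mulrBl divfK ?gt_eqF //; ring.
exists (t0 * s); split => [i|i /wS wi0]; rewrite shiftE ?wi0 ?mulr0 //.
by rewrite mulr_ge0 // ltW.
Qed.

Lemma in_conv_setC1P c a : 0 < \sum_i c i -> nu a != 0 ->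
  in_conv p (~: [set a]) (barycenter p c) <-> forall i, 0 <= c i - c a / nu a * nu i.
Proof.
move=> c_gt0 nua; rewrite in_conv_circuitP //; split => [[t [ge0 t0]]|ge0].
  have ta : t = - (c a / nu a).
    apply: (mulIf nua); rewrite mulNr divfK //; apply/eqP.
    by rewrite -addr_eq0 addrC t0 // !inE eqxx.
  by move=> i; rewrite -mulNr -ta.
exists (- (c a / nu a)); split => [i|i]; first by rewrite mulNr.
by rewrite !inE negbK => /eqP ->; rewrite mulNr divfK // subrr.
Qed.

Lemma aff_indep_setC1 a : aff_indep p (~: [set a]) <-> nu a != 0.
Proof.
split=> [indep|nua w wa w_sum w_dep].
  have [i nui] := circuit_neq0 circ; apply: contraNneq nui => nua.
  apply/eqP; apply: indep (circuit_sum circ) (circuit_dep circ) i => j.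
  by rewrite !inE negbK => /eqP ->.
have [t wE] := circuit_dependenceP w_sum w_dep.
have t0 : t = 0.
  by apply/eqP; rewrite -(mulIr_eq0 _ (mulIf nua)) -wE wa // !inE eqxx.
by move=> i; rewrite wE t0 mul0r.
Qed.

Lemma in_conv_circuit_cell x :
  in_conv p setT x -> exists2 a, 0 < nu a & in_conv p (~: [set a]) x.
Proof.
case=> u [u_ge0 _ u1 ->]; rewrite -barycenter1 //.
have [a0 a0_gt0] := circuit_exists_pos.
have [a a_gt0 a_min] := arg_minP (fun i => u i / nu i) (a0_gt0 : (fun i => 0 < nu i) a0).
exists a => //; apply/in_conv_setC1P; rewrite ?u1 ?ltr01 ?gt_eqF // => i.
have ua_ge0 : 0 <= u a / nu a by rewrite divr_ge0 // ltW.
case: (ltP 0 (nu i)) => [nui_gt0|nui_le0].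
  by rewrite subr_ge0 -ler_pdivlMr // a_min.
by rewrite addr_ge0 // oppr_ge0 mulr_ge0_le0.
Qed.

Lemma in_conv_setC1I a b x : 0 < nu a -> 0 < nu b ->
  in_conv p (~: [set a]) x -> in_conv p (~: [set b]) x ->
  in_conv p (~: [set a] :&: ~: [set b]) x.
Proof.
move=> nua nub [w [w_ge0 wa w1 xE]]; rewrite [in X in X -> _]xE -barycenter1 //.
have w_gt0 : 0 < \sum_i w i by rewrite w1 ltr01.
move/(in_conv_setC1P w_gt0 (lt0r_neq0 nub))/(_ a); rewrite wa ?inE ?eqxx //.
rewrite sub0r oppr_ge0 pmulr_lle0 // pmulr_lle0 ?invr_gt0 // => wb_le0.
have wb : w b = 0 by apply/le_anti; rewrite wb_le0 w_ge0.
exists w; split => // i; rewrite !inE negb_and !negbK.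
by case/orP => /eqP ->; [apply: wa; rewrite !inE eqxx|].
Qed.

Lemma in_conv_setC1_opposite a b : 0 < nu a -> nu b < 0 ->
  exists x, [/\ in_conv p (~: [set a]) x, in_conv p (~: [set b]) x
              & ~ in_conv p (~: [set a] :&: ~: [set b]) x].
Proof.
move=> nua nub; pose c i := Num.max (nu i) 0.
have ca : c a = nu a by rewrite /c (max_l (ltW nua)).
have cb : c b = 0 by rewrite /c (max_r (ltW nub)).
have c_gt0 : 0 < \sum_i c i.
  by apply: (sumr_gt0_term (a := a)) => [i|]; rewrite ?ca // /c le_max lexx orbT.
exists (barycenter p c); split.
- apply/in_conv_setC1P; rewrite ?gt_eqF // => i.
  by rewrite ca divff ?gt_eqF // mul1r subr_ge0 le_max lexx.
- apply/in_conv_setC1P; rewrite ?lt_eqF // => i.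
  by rewrite cb mul0r mul0r subr0 le_max lexx orbT.
- case/in_conv_circuitP => // t [_ t0].
  have /t0 : b \notin ~: [set a] :&: ~: [set b] by rewrite !inE eqxx andbF.
  rewrite cb add0r => /eqP; rewrite mulf_eq0 (lt_eqF nub) orbF => /eqP t_eq0.
  have /t0 : a \notin ~: [set a] :&: ~: [set b] by rewrite !inE eqxx.
  by rewrite ca t_eq0 mul0r addr0 => nua0; move: nua; rewrite nua0 ltxx.
Qed.

Lemma in_conv_only_setC1 a : 0 < nu a ->
  exists x, in_conv p setT x /\ forall b, 0 < nu b -> in_conv p (~: [set b]) x -> b = a.
Proof.
(* Doubling the positive part of [nu] away from [a] makes [a] the only minimizer
   of [c_b / nu_b]. *)
move=> nua; pose c i := Num.max (nu i) 0 * (if i == a then 1 else 2).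
have c_ge0 i : 0 <= c i by rewrite mulr_ge0 ?le_max ?lexx ?orbT //; case: ifP.
have ca : c a = nu a by rewrite /c eqxx mulr1 (max_l (ltW nua)).
have c_gt0 : 0 < \sum_i c i by apply: (sumr_gt0_term (a := a)); rewrite ?ca.
exists (barycenter p c); split; first by apply: in_conv_barycenter => // i; rewrite inE.
move=> b nub /(in_conv_setC1P c_gt0 (lt0r_neq0 nub))/(_ a).
case: (eqVneq b a) => [//|ba]; rewrite ca /c (negbTE ba) (max_l (ltW nub)).
rewrite [nu b * 2 / nu b]mulrAC divff ?gt_eqF // mul1r mulr_natl mulr2n.
by rewrite opprD addrA subrr sub0r oppr_ge0 leNgt nua.
Qed.

Lemma triangulation_cell T S : is_triangulation p T -> S \in T ->
  exists2 a, nu a != 0 & S = ~: [set a].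
Proof.
case=> cells _ _ ST; have [S_card S_indep] := cells S ST.
have /cards1P [a Sa] : #|~: S| == 1%N by have := cardsC S; rewrite S_card card_ord; lia.
have SE : S = ~: [set a] by rewrite -Sa setCK.
by exists a => //; apply/aff_indep_setC1; rewrite -SE.
Qed.

Lemma circuit_cells_triangulation : is_triangulation p (circuit_cells nu).
Proof.
split.
- move=> _ /circuit_cellsP [a nua ->]; split; first by rewrite cardsC1 card_ord.
  by apply/aff_indep_setC1; rewrite gt_eqF.
- move=> x; split => [/in_conv_circuit_cell [a nua xa]|[S _]].
    by exists (~: [set a]); rewrite ?setC1_circuit_cells.
  by apply: in_conv_subset; apply: subsetT.
- move=> _ _ /circuit_cellsP [a nua ->] /circuit_cellsP [b nub ->] x.
  split=> [[xa xb]|xab]; first exact: in_conv_setC1I.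
  by split; apply: in_conv_subset xab; rewrite ?subsetIl ?subsetIr.
Qed.

Lemma triangulation_circuit_cells T : is_triangulation p T ->
  {subset T <= circuit_cells nu} \/ {subset T <= circuit_cells (fun i => - nu i)}.
Proof.
move=> triT; have [_ _ meet] := triT.
case: (boolP [exists a, (~: [set a] \in T) && (0 < nu a)]) => [|no_pos].
  case/existsP => a /andP [aT nua].
  left=> S ST; have [b nub SE] := triangulation_cell triT ST; subst S.
  rewrite setC1_circuit_cells; case/orP: (lt_total nub) => // nub_lt0.
  have [x [xa xb]] := in_conv_setC1_opposite nua nub_lt0.
  by case; apply/(meet _ _ aT ST).
right=> S ST; have [b nub SE] := triangulation_cell triT ST; subst S.
rewrite setC1_circuit_cells oppr_gt0; case/orP: (lt_total nub) => // nub_gt0.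
by case/negP: no_pos; apply/existsP; exists b; rewrite ST.
Qed.

Lemma triangulation_eq_circuit_cells T : is_triangulation p T ->
  {subset T <= circuit_cells nu} -> T = circuit_cells nu.
Proof.
move=> triT T_sub; apply/eqP; rewrite eqEsubset; apply/andP; split; apply/subsetP => //.
move=> _ /circuit_cellsP [a nua ->].
have [x [xT x_only]] := in_conv_only_setC1 nua.
have [_ cover _] := triT; case/cover: xT => S ST xS.
have /circuit_cellsP [b nub SE] := T_sub S ST.
by rewrite -(x_only b nub) -?SE.
Qed.

Lemma lower_facet_circuit L :
  lower_facet p nu L -> exists2 a, 0 < nu a & L = ~: [set a].
Proof.
case=> c [c0 [d [c0_gt0 above onL [a aL] [S' /andP [S'L /eqP S'_card] _]]]].
have LE : L = ~: [set a].
  have := subset_leq_card S'L; rewrite S'_card => L_card.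
  apply/eqP; rewrite eqEcard cardsC1 card_ord L_card andbT.
  by apply/subsetP => i iL; rewrite !inE; apply: contraNneq aL => <-.
exists a => //.
pose Q i := dotv c (p i) + c0 * nu i - d.
have Q_ge0 : 0 <= Q a by rewrite subr_ge0.
have nuQ : \sum_i nu i * Q i = c0 * \sum_i nu i ^+ 2.
  transitivity (\sum_i nu i * (dotv c (p i) + - d) + c0 * \sum_i nu i ^+ 2).
    by rewrite mulr_sumr -big_split; apply: eq_bigr => i _; rewrite /Q /=; ring.
  by rewrite dependence_orth_affine ?add0r ?(circuit_sum circ) ?(circuit_dep circ).
rewrite (bigD1 a) //= big1 ?addr0 in nuQ; last first.
  by move=> i ia; rewrite /Q (proj1 (onL i)) ?subrr ?mulr0 // LE !inE.
rewrite ltNge; apply/negP => nua_le0.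
suff : c0 * \sum_i nu i ^+ 2 <= 0 by rewrite leNgt mulr_gt0 ?circuit_sqr_sum_gt0.
by rewrite -nuQ mulr_le0_ge0.
Qed.

Lemma setC1_lower_facet a : 0 < nu a -> lower_facet p nu (~: [set a]).
Proof.
move=> nua; pose K := (\sum_i nu i ^+ 2) / nu a.
have K_gt0 : 0 < K by rewrite /K divr_gt0 ?circuit_sqr_sum_gt0.
(* [K] makes [f] orthogonal to [nu], hence affine. *)
pose f i := (i == a)%:R * K - nu i.
have f_orth : \sum_i f i * nu i = 0.
  under eq_bigr do rewrite mulrBl -expr2.
  rewrite sumrB (bigD1 a) //= big1 ?addr0 => [|i /negbTE ->]; last by rewrite !mul0r.
  by rewrite eqxx mul1r divfK ?gt_eqF // subrr.
have [c [d fE]] := circuit_affine circ f_orth.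
have heightE i : dotv c (p i) + 1 * nu i = (i == a)%:R * K - d.
  by rewrite mul1r -[dotv c (p i)](addrK d) -fE /f; ring.
exists c, 1, (- d); split => [||i||].
- exact: ltr01.
- by move=> i; rewrite heightE lerDr mulr_ge0 ?ler0n ?ltW.
- rewrite heightE !inE; split => [/negbTE ->|/eqP]; first by rewrite mul0r sub0r.
  by rewrite -subr_eq0 opprK subrK mulf_eq0 (gt_eqF K_gt0) orbF pnatr_eq0 eqb0.
- by exists a; rewrite !inE eqxx.
- exists (~: [set a]); first by rewrite subxx cardsC1 card_ord eqxx.
  by apply/aff_indep_lift/aff_indep_setC1; rewrite gt_eqF.
Qed.

Lemma circuit_cells_regular : regular_triangulation p (circuit_cells nu).
Proof.
split; first exact: circuit_cells_triangulation.
exists nu; split=> [_ /circuit_cellsP [a nua ->]|L /lower_facet_circuit [a nua ->]].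
  by exists (~: [set a]); split; [apply: setC1_lower_facet|].
by exists (~: [set a]); rewrite ?setC1_circuit_cells.
Qed.

End Circuit.

Lemma affine_circuitN (R : realType) m k (p : 'I_m -> 'rV[R]_k) nu :
  affine_circuit p nu -> affine_circuit p (fun i => - nu i).
Proof.
case=> nu_sum nu_dep [i nui] nu_affine; split.
- by rewrite sumrN nu_sum oppr0.
- by under eq_bigr do rewrite scaleNr; rewrite sumrN nu_dep oppr0.
- by exists i; rewrite oppr_eq0.
- move=> f f_orth; apply: nu_affine; apply/eqP; rewrite -oppr_eq0 -sumrN.
  by under eq_bigr do rewrite -mulrN; rewrite f_orth.
Qed.

Lemma circuit_triangulations (R : realType) n (p : 'I_n.+2 -> 'rV[R]_n) nu T :
  affine_circuit p nu ->
  is_triangulation p T <-> T = circuit_cells nu \/ T = circuit_cells (fun i => - nu i).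
Proof.
move=> circ; have circN := affine_circuitN circ; split => [triT|].
  case: (triangulation_circuit_cells circ triT) => T_sub; [left|right].
    exact (triangulation_eq_circuit_cells circ triT T_sub).
  exact (triangulation_eq_circuit_cells circN triT T_sub).
by case=> ->; apply: circuit_cells_triangulation.
Qed.

Lemma circuit_cells_neq (R : realType) n (p : 'I_n.+2 -> 'rV[R]_n) nu :
  affine_circuit p nu -> circuit_cells nu <> circuit_cells (fun i => - nu i).
Proof.
move=> circ cellsE; have [a nua] := circuit_exists_pos circ.
have := setC1_circuit_cells (fun i => - nu i) a.
by rewrite -cellsE setC1_circuit_cells nua oppr_gt0 ltNge ltW.
Qed.

Lemma dotv_row_e (R : realType) n (phi : nat -> R) k :
  phi 0%N = 0 -> phi n.+1 = 0 -> (k <= n.+1)%N ->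
  dotv (\row_(j < n) phi j.+1) (e R n k) = phi k.
Proof.
move=> phi0 phin k_le; rewrite /dotv; under eq_bigr do rewrite !mxE.
case: k k_le => [|k] k_le; first by rewrite phi0 big1 // => j _; rewrite mulr0.
case: (ltnP k n) => [k_lt|k_ge].
  rewrite (bigD1 (Ordinal k_lt)) //= eqxx mulr1 big1 ?addr0 // => j jk.
  rewrite eqSS; have /negbTE -> : k != j by apply: contra jk => /eqP kj; apply/eqP/val_inj.
  by rewrite mulr0.
have -> : k = n by apply/eqP; rewrite eqn_leq k_ge -ltnS k_le.
by rewrite phin big1 // => j _; rewrite eqSS gtn_eqF ?mulr0.
Qed.

Lemma e0 (R : realType) n : e R n 0 = 0.
Proof. by apply/rowP => j; rewrite !mxE. Qed.

Lemma e_last (R : realType) n : e R n n.+1 = 0.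
Proof. by apply/rowP => j; rewrite !mxE eqSS gtn_eqF. Qed.

Lemma pm1_eqE (R : realType) (x y : R) : x = 1 \/ x = -1 -> y = 1 \/ y = -1 ->
  (x == y) = (0 < x * y).
Proof.
have one_neqN1 : (1 == -1 :> R) = false by rewrite gt_eqF //; lra.
by case=> ->; case=> ->;
  rewrite ?mulrNN ?mul1r ?mulr1 ?oppr_gt0 ?ltr10 ?ltr01 ?eqxx // eq_sym.
Qed.

Definition VN_dep (R : realType) n (lam : 'I_n.+1 -> R) (k : 'I_n.+2) : R :=
  if k == ord0 then 0 else lamk lam k * lam ord0.

Section VN.
Variables (R : realType) (n : nat) (lam : 'I_n.+1 -> R).

Lemma lamk_lift i : lamk lam (lift ord0 i) = lam i.
Proof. by rewrite /lamk lift0 inord_val. Qed.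

Lemma VN0 : VN lam ord0 = 0.
Proof. by []. Qed.

Lemma VN_lift i : VN lam (lift ord0 i) = lam i *: (e R n i - e R n i.+1).
Proof. by rewrite /VN lift0 lamk_lift. Qed.

Lemma VN_dep0 : VN_dep lam ord0 = 0.
Proof. by rewrite /VN_dep eqxx. Qed.

Lemma VN_dep_lift i : VN_dep lam (lift ord0 i) = lam i * lam ord0.
Proof. by rewrite /VN_dep eq_sym (negbTE (neq_lift _ _)) lamk_lift. Qed.

Hypothesis lamL : in_Lambda lam.

Lemma lam_sqr i : lam i * lam i = 1.
Proof. by case: (lamL.1 i) => ->; rewrite ?mulrNN mulr1. Qed.

Lemma lam_neq0 i : lam i != 0.
Proof. by case: (lamL.1 i) => ->; rewrite ?oppr_eq0 oner_eq0. Qed.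

Lemma VN_dep_gt0 s k : s = 1 \/ s = -1 ->
  (0 < s * VN_dep lam k) = (0 < k)%N && (lamk lam k == s * lam ord0).
Proof.
move=> s_pm1; case: (unliftP ord0 k) => [i ->|->]; last by rewrite VN_dep0 mulr0 ltxx.
have s_lam0 : s * lam ord0 = 1 \/ s * lam ord0 = -1.
  by case: s_pm1 (lamL.1 ord0) => -> [] ->; rewrite ?mul1r ?mulN1r ?opprK; by [left|right].
by rewrite VN_dep_lift lamk_lift lift0 /= mulrCA (pm1_eqE (lamL.1 i) s_lam0).
Qed.

Lemma Delta_plusE : Delta_plus lam = circuit_cells (VN_dep lam).
Proof.
have E k : (0 < VN_dep lam k) = (0 < k)%N && (lamk lam k == lam ord0).
  by rewrite -[VN_dep lam k]mul1r VN_dep_gt0 ?mul1r //; left.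
apply/setP => S; apply/imsetP/imsetP => -[k];
  by rewrite !inE ?E => kP ->; exists k; rewrite ?inE ?E.
Qed.

Lemma Delta_minusE : Delta_minus lam = circuit_cells (fun k => - VN_dep lam k).
Proof.
have E k : (0 < - VN_dep lam k) = (0 < k)%N && (lamk lam k == - lam ord0).
  by rewrite -mulN1r VN_dep_gt0 ?mulN1r //; right.
apply/setP => S; apply/imsetP/imsetP => -[k];
  by rewrite !inE ?E => kP ->; exists k; rewrite ?inE ?E.
Qed.

Lemma VN_dep_sum : \sum_k VN_dep lam k = 0.
Proof.
rewrite big_ord_recl VN_dep0 add0r.
by under eq_bigr do rewrite VN_dep_lift; rewrite -mulr_suml lamL.2 mul0r.
Qed.

Lemma VN_dep_dependence : \sum_k VN_dep lam k *: VN lam k = 0.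
Proof.
rewrite big_ord_recl VN_dep0 scale0r add0r.
under eq_bigr do rewrite VN_dep_lift VN_lift scalerA mulrAC lam_sqr mul1r.
rewrite -scaler_sumr -(big_mkord xpredT (fun i => e R n i - e R n i.+1)).
under eq_bigr do rewrite -opprB.
by rewrite sumrN telescope_sumr // e0 e_last subrr oppr0 scaler0.
Qed.

(* The linear part is [c_j = phi_(j+1)], where [phi] are the partial sums of
   [lam_i (f v_(i+1) - f v_0)]; orthogonality to [VN_dep] makes [phi_(n+1)] vanish. *)
Lemma VN_affine f : \sum_k f k * VN_dep lam k = 0 ->
  exists c d, forall k, f k = dotv c (VN lam k) + d.
Proof.
move=> f_orth; pose g i := lam i * (f (lift ord0 i) - f ord0).
have g_sum : \sum_i g i = 0.
  rewrite /g; under eq_bigr do rewrite mulrBr.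
  rewrite sumrB -mulr_suml lamL.2 mul0r subr0.
  apply/eqP; rewrite -(mulIr_eq0 _ (mulIf (lam_neq0 ord0))) mulr_suml; apply/eqP.
  move: f_orth; rewrite big_ord_recl VN_dep0 mulr0 add0r => f_orth.
  by rewrite -[RHS]f_orth; apply: eq_bigr => i _; rewrite VN_dep_lift mulrA [lam i * _]mulrC.
pose phi j := - \sum_(i < n.+1 | (i < j)%N) g i.
have phi0 : phi 0%N = 0 by rewrite /phi big_pred0 ?oppr0.
have phi_last : phi n.+1 = 0.
  by rewrite /phi (eq_bigl xpredT) => [|i]; rewrite ?g_sum ?oppr0 ?ltn_ord.
have phi_step (i : 'I_n.+1) : phi i - phi i.+1 = g i.
  rewrite /phi [\sum_(j < n.+1 | (j < i.+1)%N) g j](bigD1 i) ?ltnSn //=.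
  rewrite [\sum_(j < n.+1 | _ && _) g j](eq_bigl (fun j : 'I_n.+1 => (j < i)%N)) => [|j].
    by rewrite opprK addrCA addNr addr0.
  by rewrite ltnS ltn_neqAle -val_eqE andbC.
exists (\row_(j < n) phi j.+1), (f ord0) => k.
case: (unliftP ord0 k) => [i ->|->]; last by rewrite VN0 dotv0 add0r.
rewrite VN_lift dotvZ dotvB !dotv_row_e ?ltn_ord // 1?ltnW ?ltn_ord //.
by rewrite phi_step /g mulrA lam_sqr mul1r subrK.
Qed.

Lemma VN_affine_circuit : affine_circuit (VN lam) (VN_dep lam).
Proof.
split; [exact: VN_dep_sum|exact: VN_dep_dependence| |exact: VN_affine].
by exists (lift ord0 ord0); rewrite VN_dep_lift lam_sqr oner_eq0.
Qed.

End VN.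

Theorem lemma5p3 (R : realType) (n : nat) (lam : 'I_n.+1 -> R) :
  ~~ odd n.+1 -> (4 <= n.+1)%N -> in_Lambda lam ->
  (forall T : {set {set 'I_n.+2}},
     is_triangulation (VN lam) T <-> T = Delta_plus lam \/ T = Delta_minus lam) /\
  Delta_plus lam <> Delta_minus lam /\
  regular_triangulation (VN lam) (Delta_plus lam) /\
  regular_triangulation (VN lam) (Delta_minus lam).
Proof.
move=> _ _ lamL; have circ := VN_affine_circuit lamL.
rewrite (Delta_plusE lamL) (Delta_minusE lamL); split; last split.
- by move=> T; apply: circuit_triangulations.
- exact (circuit_cells_neq circ).
- by split; apply: circuit_cells_regular => //; apply: affine_circuitN.
Qed.
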